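(* Let $X$ be a real Banach space, $I=\{1,\ldots,m\}$, $J=\{1,\ldots,l\}$, $f_i,g_j\colon X\to\mathbb{R}$, $M=\{x\in X\mid f_i(x)=0\ \forall i\in I,\ g_j(x)\le0\ \forall j\in J\}$, $\overline{x}\in M$, and $J(\overline{x})=\{j\in J\mid g_j(\overline{x})=0\}$. Let the functions $f_i$, $i\in I$, and $g_j$, $j\in J(\overline{x})$, be quasidifferentiable at $\overline{x}$ with given quasidifferentials, and let $x_i^*\in\underline{\partial} f_i(\overline{x})$, $y_i^*\in\overline{\partial} f_i(\overline{x})$, $i\in I$, and $z_j^*\in\overline{\partial} g_j(\overline{x})$, $j\in J(\overline{x})$, be given. Put $C_i=(\underline{\partial} f_i(\overline{x})+y_i^* )\cup(-x_i^*-\overline{\partial} f_i(\overline{x}))$, $i\in I$. Then the following three conditions (1) for any $i\in I$ there exists $v_i\in X$ such that $s(\underline{\partial} f_i(\overline{x})+y_i^*,v_i)<0$ and for any $k\ne i$, $s(\underline{\partial} f_k(\overline{x})+y_k^*,v_i)\le 0$ and $s(-x_k^*-\overline{\partial} f_k(\overline{x}),v_i)\le0$; (2) for any $i\in I$ there exists $w_i\in X$ such that $s(-x_i^*-\overline{\partial} f_i(\overline{x}),w_i)<0$ and for any $k\ne i$, $s(-x_k^*-\overline{\partial} f_k(\overline{x}),w_i)\le0$ and $s(\underline{\partial} f_k(\overline{x})+y_k^*,w_i)\le0$; (3) there exists $v_0\in X$ with $s(\underline{\partial} g_j(\overline{x})+z_j^*,v_0)<0$ for all $j\in J(\overline{x})$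 and $s(\underline{\partial} f_i(\overline{x})+y_i^*,v_0)\le0$, $s(-x_i^*-\overline{\partial} f_i(\overline{x}),v_0)\le0$ for all $i\in I$; are all satisfied if and only if $$C_i\cap\operatorname{cl}^*\operatorname{cone}\{-C_k\mid k\ne i\}=\emptyset\quad\forall i\in I$$ and $$\operatorname{co}\{\underline{\partial} g_j(\overline{x})+z_j^*\mid j\in J(\overline{x})\}\cap\operatorname{cl}^*\operatorname{cone}\{-C_i\mid i\in I\}=\emptyset.$$
   Context: $X^*$ is the dual of $X$ with pairing $\langle\cdot,\cdot\rangle$; $\operatorname{cl}^*$ is closure in the weak$^*$ topology. A function $f$ is quasidifferentiable at $x$ if the directional derivative $f'(x,v)=\lim_{\alpha\to+0}(f(x+\alpha v)-f(x))/\alpha$ exists and is finite for all $v$ and there is a pair $[\underline{\partial} f(x),\overline{\partial} f(x)]$ of convex weak$^*$ compact subsets of $X^*$ with $f'(x,v)=\max_{x^*\in\underline{\partial} f(x)}\langle x^*,v\rangle+\min_{y^*\in\overline{\partial} f(x)}\langle y^*,v\rangle$ for all $v$; a specific such pair is fixed for each function. $s(C,v)=\sup_{x^*\in C}\langle x^*,v\rangle$. For $A$ a subset of a real vector space, $\operatorname{cone}A$ is the set of all finite combinations $\sum\lambda_ix_i$ with $x_i\in A$, $\lambda_i\ge0$; for a family of sets, $\operatorname{cone}\{A_k\}$ means the cone of their union; $\operatorname{co}$ denotes convex hull (of the union of the listed sets). *)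

From HB Require Import structures.
From mathcomp Require Import all_boot all_order all_algebra.
From mathcomp Require Import all_classical all_reals all_analysis.
Set Implicit Arguments. Unset Strict Implicit. Unset Printing Implicit Defensive.
Import Order.TTheory GRing.Theory Num.Theory.
Import numFieldNormedType.Exports.
Local Open Scope classical_set_scope.
Local Open Scope ring_scope.

Section QD.
Variables (R : realType) (X : normedModType R).

Definition in_dual (phi : X -> R) : Prop :=
  (forall (a : R) (x y : X), phi (a *: x + y) = a * phi x + phi y) /\
  continuous phi.

(* the weak^* topology on X^* is the subspace topology induced by the
   topology of pointwise convergence {ptws X -> R} *)
Definition wstar_closure (A : set (X -> R)) : set (X -> R) :=
  [set phi | in_dual phi /\ closure (A : set {ptws X -> R}) phi].

Definition wstar_compact (A : set (X -> R)) : Prop :=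
  A `<=` in_dual /\ compact (A : set {ptws X -> R}).

Definition convex_set (A : set (X -> R)) : Prop :=
  forall phi psi (t : R), 0 <= t <= 1 -> A phi -> A psi ->
    A (fun x => t * phi x + (1 - t) * psi x).

Definition supp (C : set (X -> R)) (v : X) : R := sup [set phi v | phi in C].

Definition shift_set (C : set (X -> R)) (y : X -> R) : set (X -> R) :=
  [set psi | exists2 phi, C phi & psi = (fun x => phi x + y x)].

Definition negshift_set (x0 : X -> R) (D : set (X -> R)) : set (X -> R) :=
  [set psi | exists2 phi, D phi & psi = (fun x => - x0 x - phi x)].

Definition opp_set (C : set (X -> R)) : set (X -> R) :=
  [set psi | C (fun x => - psi x)].

Definition cone (A : set (X -> R)) : set (X -> R) :=
  [set psi | exists (n : nat) (c : 'I_n -> R) (a : 'I_n -> X -> R),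
     [/\ forall k, 0 <= c k, forall k, A (a k) &
         psi = (fun x => \sum_(k < n) c k * a k x)]].

Definition co (A : set (X -> R)) : set (X -> R) :=
  [set psi | exists (n : nat) (c : 'I_n -> R) (a : 'I_n -> X -> R),
     [/\ forall k, 0 <= c k, \sum_(k < n) c k = 1, forall k, A (a k) &
         psi = (fun x => \sum_(k < n) c k * a k x)]].

Definition quasidiff (f : X -> R) (x : X) (Dl Du : set (X -> R)) : Prop :=
  [/\ Dl !=set0, Du !=set0, convex_set Dl /\ wstar_compact Dl,
      convex_set Du /\ wstar_compact Du &
      forall v : X,
        (fun a : R => (f (x + a *: v) - f x) / a) @ 0^'+ -->
          (sup [set phi v | phi in Dl] + inf [set psi v | psi in Du])].

End QD.

From Pilot Require Import Defs.
From HB Require Import structures.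
From mathcomp Require Import all_boot all_order all_algebra.
From mathcomp Require Import all_classical all_reals all_analysis.
From mathcomp Require Import ring lra.
Import Order.TTheory GRing.Theory Num.Theory.
Import numFieldNormedType.Exports.
Local Open Scope classical_set_scope.
Local Open Scope ring_scope.

Set Implicit Arguments. Unset Strict Implicit. Unset Printing Implicit Defensive.

(* Each condition on the left asks for a direction v in which a nonempty convex
   weak*-compact set D of functionals (one half of some C_i, or the convex hull of the
   shifted active quasidifferentials of the g_j) is strictly negative while the
   generators -C_k of a cone are nonnegative; the matching condition on the right says
   that D misses the weak*-closure of that cone. Such a v obviously keeps D away from the
   closure. Conversely, compactness of D yields finitely many points x_1, ..., x_N and
   eps > 0 such that D and the cone stay eps apart in the l1-distance of the values at
   these points, and a Hahn-Banach argument in R^N produces coefficients y for which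
   v = \sum_t y_t x_t works. *)


Definition catf T n1 n2 (f1 : 'I_n1 -> T) (f2 : 'I_n2 -> T) : 'I_(n1 + n2) -> T :=
  fun k => match fintype.split k with inl i => f1 i | inr j => f2 j end.

Lemma catf_lshift T n1 n2 (f1 : 'I_n1 -> T) (f2 : 'I_n2 -> T) i :
  catf f1 f2 (lshift n2 i) = f1 i.
Proof. by rewrite /catf (unsplitK (inl _ i)). Qed.

Lemma catf_rshift T n1 n2 (f1 : 'I_n1 -> T) (f2 : 'I_n2 -> T) i :
  catf f1 f2 (rshift n1 i) = f2 i.
Proof. by rewrite /catf (unsplitK (inr _ i)). Qed.

Lemma catfP T n1 n2 (f1 : 'I_n1 -> T) (f2 : 'I_n2 -> T) (P : T -> Prop) :
  (forall i, P (f1 i)) -> (forall i, P (f2 i)) -> forall k, P (catf f1 f2 k).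
Proof. by move=> h1 h2 k; rewrite /catf; case: (fintype.split k). Qed.

Section DualAlgebra.
Variables (R : realType) (X : normedModType R).
Implicit Types (phi psi : X -> R) (A : set (X -> R)).

Lemma in_dual_lc (a b : R) phi psi :
  in_dual phi -> in_dual psi -> in_dual (fun x => a * phi x + b * psi x).
Proof.
move=> [lphi cphi] [lpsi cpsi]; split=> [s x y|x]; first by rewrite lphi lpsi; ring.
have cphi' : {for x, continuous (fun y => a * phi y)}.
  by apply: continuousM; [exact: cst_continuous|exact: cphi].
have cpsi' : {for x, continuous (fun y => b * psi y)}.
  by apply: continuousM; [exact: cst_continuous|exact: cpsi].
exact: continuousD cphi' cpsi'.
Qed.

Lemma in_dual_sum n (c : 'I_n -> R) (phi : 'I_n -> X -> R) :
  (forall k, in_dual (phi k)) -> in_dual (fun x => \sum_k c k * phi k x).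
Proof.
move=> dphi; rewrite -(fct_sumE _ _ (fun k x => c k * phi k x)).
apply: (big_ind (@in_dual R X)) => [|psi1 psi2 d1 d2|k _].
- by split=> [s x y|x]; [rewrite /= mulr0 addr0|exact: cst_continuous].
- by have := in_dual_lc 1 1 d1 d2; under eq_fun do rewrite !mul1r.
- by have := in_dual_lc (c k) 0 (dphi k) (dphi k); under eq_fun do rewrite mul0r addr0.
Qed.

Lemma dualf0 phi : in_dual phi -> phi 0 = 0.
Proof. by case=> lphi _; have := lphi 1 0 0; rewrite scale1r addr0 mul1r; lra. Qed.

Lemma dualf_sum phi n (c : 'I_n -> R) (x : 'I_n -> X) :
  in_dual phi -> phi (\sum_k c k *: x k) = \sum_k c k * phi (x k).
Proof.
move=> dphi; elim/big_rec2: _ => [|k v w _ <-]; first exact: dualf0.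
by case: dphi => -> _.
Qed.

Lemma opp_set_in_dual A : A `<=` @in_dual R X -> opp_set A `<=` @in_dual R X.
Proof.
move=> dA psi /dA dpsi; have := in_dual_lc (-1) 0 dpsi dpsi.
by under eq_fun do rewrite mulN1r opprK mul0r addr0.
Qed.

Lemma cone0 A : cone A (fun _ => 0).
Proof.
exists 0%N, (fun _ => 0), (fun _ _ => 0); split=> [[]|[]|] //.
by apply/funext => x; rewrite big_ord0.
Qed.

Lemma cone_sub A : A `<=` cone A.
Proof.
move=> phi Aphi; exists 1%N, (fun _ => 1), (fun _ => phi); split=> //.
by apply/funext => x; rewrite big_ord1 mul1r.
Qed.

Lemma cone_add A phi psi : cone A phi -> cone A psi -> cone A (fun x => phi x + psi x).
Proof.
move=> [n1 [c1 [a1 [c1p a1A ->]]]] [n2 [c2 [a2 [c2p a2A ->]]]].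
exists (n1 + n2)%N, (catf c1 c2), (catf a1 a2); split.
- exact: (catfP (P := fun r => 0 <= r)).
- exact: (catfP (P := A)).
- apply/funext => x; rewrite big_split_ord /=.
  by congr (_ + _); apply: eq_bigr => k _; rewrite ?catf_lshift ?catf_rshift.
Qed.

Lemma cone_scale A (s : R) phi : 0 <= s -> cone A phi -> cone A (fun x => s * phi x).
Proof.
move=> s0 [n [c [a [c0 aA ->]]]]; exists n, (fun k => s * c k), a; split=> //.
  by move=> k; exact: mulr_ge0.
by apply/funext => x; rewrite mulr_sumr; apply: eq_bigr => k _; rewrite mulrA.
Qed.

Lemma cone_ge0 A (v : X) phi : (forall psi, A psi -> 0 <= psi v) -> cone A phi -> 0 <= phi v.
Proof.
move=> A0 [n [c [a [c0 aA ->]]]]; apply: sumr_ge0 => k _.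
by apply: mulr_ge0 => //; exact: A0.
Qed.

End DualAlgebra.

Section SublinearMinorant.
Variables (R : realType) (V : lmodType R) (p : V -> R).
Hypothesis p_subadd : forall u w, p (u + w) <= p u + p w.
Hypothesis p_scale : forall (s : R) u, 0 < s -> s * p u <= p (s *: u).

Lemma sublinear_extend (W : set V) (F : V -> R) (e : V) :
  W 0 -> (forall u w, W u -> W w -> W (u + w)) -> (forall s u, W u -> W (s *: u)) ->
  (forall u w, F (u + w) = F u + F w) -> (forall s u, F (s *: u) = s * F u) ->
  (forall w, W w -> F w <= p w) ->
  exists c, forall w s, W w -> F w + s * c <= p (w + s *: e).
Proof.
move=> W0 WD WZ FD FZ Fp.
pose L := [set F w - p (w - e) | w in W].
have L_ub w' : W w' -> ubound L (p (w' + e) - F w').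
  move=> Ww' _ [w Ww <-].
  have := Fp _ (WD _ _ Ww Ww'); have := p_subadd (w - e) (w' + e).
  by rewrite addrACA addNr addr0 FD; lra.
have L0 : L !=set0 by exists (F 0 - p (0 - e)), 0.
have c_ge w : W w -> F w - p (w - e) <= sup L.
  by move=> Ww; apply: ub_le_sup; [exists (p (0 + e) - F 0); exact: L_ub|exists w].
have c_le w : W w -> sup L <= p (w + e) - F w by move=> Ww; exact: ge_sup (L_ub _ Ww).
exists (sup L) => w s Ww; have [s_lt0|s_gt0|->] := ltrgtP s 0; last first.
- by rewrite mul0r addr0 scale0r addr0; exact: Fp.
- have := c_le _ (WZ s^-1 _ Ww); rewrite FZ.
  have := p_scale (s^-1 *: w + e) s_gt0.
  rewrite scalerDr scalerA mulfV ?gt_eqF // scale1r => hp.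
  move=> /(ler_wpM2l (ltW s_gt0)); rewrite mulrBr mulrA mulfV ?gt_eqF // mul1r.
  lra.
- have r_gt0 : 0 < - s by rewrite oppr_gt0.
  have := c_ge _ (WZ (- s)^-1 _ Ww); rewrite FZ.
  have := p_scale ((- s)^-1 *: w - e) r_gt0.
  rewrite scalerBr scalerA mulfV ?gt_eqF // scale1r scaleNr opprK => hp.
  move=> /(ler_wpM2l (ltW r_gt0)); rewrite mulrBr mulrA mulfV ?gt_eqF // mul1r.
  lra.
Qed.

End SublinearMinorant.

Lemma sublinear_linear_minorant (R : realType) N (p : ('I_N -> R) -> R) :
  (forall u w, p (u + w) <= p u + p w) ->
  (forall (s : R) u, 0 < s -> s * p u <= p (s *: u)) ->
  exists a : 'I_N -> R, forall z, \sum_t a t * z t <= p z.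
Proof.
move=> p_subadd p_scale.
pose supported k (z : 'I_N -> R) := forall t : 'I_N, (k <= t)%N -> z t = 0.
suff /(_ N (leqnn N)) [a Ha] : forall k, (k <= N)%N ->
    exists a : 'I_N -> R, forall z, supported k z -> \sum_t a t * z t <= p z.
  by exists a => z; apply: Ha => t; rewrite leqNgt ltn_ord.
elim=> [_|k IH kN].
  exists (fun _ => 0) => z z0; have -> : z = 0 by apply/funext => t; exact: z0.
  by rewrite big1 => [|t _]; [have := p_subadd 0 0; rewrite addr0; lra|rewrite mul0r].
have [a Ha] := IH (ltnW kN); pose t0 := Ordinal kN.
pose e : 'I_N -> R := fun t => (t == t0)%:R.
have [||||||c Hc] := sublinear_extend p_subadd p_scale (W := supported k)
    (F := fun z => \sum_t a t * z t) e => //.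
- by move=> u w Wu Ww t kt; rewrite fctE Wu ?Ww ?addr0.
- by move=> s u Wu t kt; rewrite fctE Wu ?scaler0.
- by move=> u w; rewrite -big_split; apply: eq_bigr => t _; rewrite mulrDr.
- by move=> s u; rewrite mulr_sumr; apply: eq_bigr => t _; rewrite mulrCA.
exists (fun t => if t == t0 then c else a t) => z zk.
pose y := z - z t0 *: e.
have Wy : supported k y.
  move=> t kt; rewrite /y !fctE /e -[_ *: _]/(_ * _).
  have [->|tt0] := eqVneq t t0; first by rewrite mulr1 subrr.
  rewrite mulr0 subr0 zk // ltn_neqAle kt andbT.
  by apply: contra tt0 => /eqP kt'; apply/eqP/val_inj.
suff -> : \sum_t (if t == t0 then c else a t) * z t = \sum_t a t * y t + z t0 * c.
  by have := Hc y (z t0) Wy; rewrite subrK.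
rewrite (bigD1 t0) //= [X in _ = X + _](bigD1 t0) //= /y !fctE /e -[_ *: _]/(_ * _) eqxx.
rewrite mulr1 subrr mulr0 add0r addrC [c * _]mulrC; congr (_ + _).
by apply: eq_bigr => t /negbTE tt0; rewrite tt0 mulr0n scaler0 subr0.
Qed.

Lemma convex_conic (R : realType) (V : lmodType R) (A : set V) :
  (forall a b (t : R), 0 <= t <= 1 -> A a -> A b -> A (t *: a + (1 - t) *: b)) ->
  forall (mu1 mu2 : R) a1 a2, 0 <= mu1 -> 0 <= mu2 -> A a1 -> A a2 ->
  exists2 a, A a & mu1 *: a1 + mu2 *: a2 = (mu1 + mu2) *: a.
Proof.
move=> A_convex mu1 mu2 a1 a2 mu1_ge0 mu2_ge0 Aa1 Aa2.
have [mu_eq0|mu_neq0] := eqVneq (mu1 + mu2) 0.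
  have [-> ->] : mu1 = 0 /\ mu2 = 0 by split; lra.
  by exists a1; rewrite // !scale0r !addr0 scale0r.
pose t := mu1 / (mu1 + mu2).
exists (t *: a1 + (1 - t) *: a2).
  by apply: A_convex => //; rewrite divr_ge0 ?addr_ge0 //= ler_pdivrMr ?mul1r; lra.
rewrite scalerDr !scalerA /t; congr (_ *: _ + _ *: _); field => //.
Qed.

Section FiniteSeparation.
Variables (R : realType) (N : nat) (A C : set ('I_N -> R)) (eps : R).
Hypothesis A_nonempty : A !=set0.
Hypothesis A_convex :
  forall a b (t : R), 0 <= t <= 1 -> A a -> A b -> A (t *: a + (1 - t) *: b).
Hypothesis C0 : C 0.
Hypothesis CD : forall c d, C c -> C d -> C (c + d).
Hypothesis CZ : forall (s : R) c, 0 <= s -> C c -> C (s *: c).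
Hypothesis A_C_far : forall a c, A a -> C c -> eps <= \sum_t `|a t - c t|.

Let norm1 (z : 'I_N -> R) := \sum_t `|z t|.

Let norm1D u w : norm1 (u + w) <= norm1 u + norm1 w.
Proof. by rewrite /norm1 -big_split; apply: ler_sum => t _; exact: ler_normD. Qed.

Let norm1Z (s : R) z : norm1 (s *: z) = `|s| * norm1 z.
Proof. by rewrite /norm1 mulr_sumr; apply: eq_bigr => t _; rewrite -normrM. Qed.

(* The gauge p z = inf { |z + (m a - c)|_1 - m eps : m >= 0, a in A, c in C } is
   sublinear and, by A_C_far, bounded below by -|z|_1; a linear minorant y of p satisfies
   y (- a) <= p (- a) <= - eps on A and y c <= p c <= 0 on C. *)
Let E (wm : ('I_N -> R) * R) :=
  exists a c, [/\ 0 <= wm.2, A a, C c & wm.1 = wm.2 *: a - c].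

Let E_add w1 m1 w2 m2 : E (w1, m1) -> E (w2, m2) -> E (w1 + w2, m1 + m2).
Proof.
move=> [a1 [c1 [/= m1_ge0 Aa1 Cc1 ->]]] [a2 [c2 [/= m2_ge0 Aa2 Cc2 ->]]].
have [a Aa eq_a] := convex_conic A_convex m1_ge0 m2_ge0 Aa1 Aa2.
exists a, (c1 + c2); split=> //=; first exact: addr_ge0.
  exact: CD.
by rewrite -eq_a opprD addrACA.
Qed.

Let E_scale (s : R) w m : 0 < s -> E (w, m) -> E (s *: w, s * m).
Proof.
move=> s_gt0 [a [c [/= m_ge0 Aa Cc ->]]]; exists a, (s *: c); split=> //=.
- exact: mulr_ge0 (ltW s_gt0) m_ge0.
- exact: CZ (ltW s_gt0) Cc.
- by rewrite scalerBr scalerA.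
Qed.

Let E_mass w m : E (w, m) -> m * eps <= norm1 w.
Proof.
move=> [a [c [/= m_ge0 Aa Cc ->]]].
have [->|m_gt0] := eqVneq m 0; first by rewrite mul0r; exact: sumr_ge0.
have {}m_gt0 : 0 < m by rewrite lt_def m_gt0.
have -> : m *: a - c = m *: (a - m^-1 *: c).
  by rewrite scalerBr scalerA mulfV ?gt_eqF // scale1r.
rewrite norm1Z gtr0_norm // ler_pM2l //.
have minv_ge0 : 0 <= m^-1 by rewrite invr_ge0 ltW.
exact: A_C_far Aa (CZ minv_ge0 Cc).
Qed.

Let norm1N z : norm1 (- z) = norm1 z.
Proof. by rewrite -scaleN1r norm1Z normrN normr1 mul1r. Qed.

Let norm10 : norm1 0 = 0.
Proof. by rewrite /norm1 big1 // => t _; rewrite normr0. Qed.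

Let E0 : E (0, 0).
Proof.
by have [a Aa] := A_nonempty; exists a, 0; split=> //=; rewrite scale0r subr0.
Qed.

Let gauge z := inf [set norm1 (z + wm.1) - wm.2 * eps | wm in E].

Let gauge_set_lb z : lbound [set norm1 (z + wm.1) - wm.2 * eps | wm in E] (- norm1 z).
Proof.
move=> _ [[w m] Ewm <-] /=; have := E_mass Ewm.
have := norm1D (- z) (z + w); rewrite addKr norm1N; lra.
Qed.

Let gauge_le z w m : E (w, m) -> gauge z <= norm1 (z + w) - m * eps.
Proof.
by move=> Ewm; apply: ge_inf; [exists (- norm1 z); exact: gauge_set_lb|exists (w, m)].
Qed.

Let gauge_ge z b :
  (forall w m, E (w, m) -> b <= norm1 (z + w) - m * eps) -> b <= gauge z.
Proof.
move=> hb; apply: lb_le_inf; first by exists (norm1 (z + 0) - 0 * eps), (0, 0).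
by move=> _ [[w m] Ewm <-]; exact: hb.
Qed.

Let gauge_subadd u w : gauge (u + w) <= gauge u + gauge w.
Proof.
have key w1 m1 w2 m2 : E (w1, m1) -> E (w2, m2) ->
    gauge (u + w) <= (norm1 (u + w1) - m1 * eps) + (norm1 (w + w2) - m2 * eps).
  move=> E1 E2; apply: le_trans (gauge_le _ (E_add E1 E2)) _.
  by have := norm1D (u + w1) (w + w2); rewrite addrACA; lra.
suff : gauge (u + w) - gauge u <= gauge w by lra.
apply: gauge_ge => w2 m2 E2.
suff : gauge (u + w) - (norm1 (w + w2) - m2 * eps) <= gauge u by lra.
by apply: gauge_ge => w1 m1 E1; have := key _ _ _ _ E1 E2; lra.
Qed.

Let gauge_scale (s : R) z : 0 < s -> s * gauge z <= gauge (s *: z).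
Proof.
move=> s_gt0; apply: gauge_ge => w m Ewm.
have sinv_gt0 : 0 < s^-1 by rewrite invr_gt0.
have -> : s *: z + w = s *: (z + s^-1 *: w).
  by rewrite scalerDr scalerA mulfV ?gt_eqF // scale1r.
apply: le_trans (ler_wpM2l (ltW s_gt0) (gauge_le z (E_scale sinv_gt0 Ewm))) _.
by rewrite norm1Z gtr0_norm // mulrBr !mulrA mulfV ?gt_eqF // mul1r lexx.
Qed.

Lemma finite_cone_separation : exists y : 'I_N -> R,
  (forall a, A a -> \sum_t y t * a t <= - eps) /\ (forall c, C c -> 0 <= \sum_t y t * c t).
Proof.
have [b Hb] := sublinear_linear_minorant gauge_subadd gauge_scale.
exists (- b); split=> [a Aa|c Cc].
- have Ea : E (a, 1) by exists a, 0; split=> //=; rewrite scale1r subr0.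
  have := le_trans (Hb (- a)) (gauge_le (- a) Ea); rewrite addNr norm10 mul1r.
  by under eq_bigr do rewrite fctE mulrN -mulNr; rewrite sub0r.
- have Ec : E (- c, 0).
    by have [a Aa] := A_nonempty; exists a, c; split=> //=; rewrite scale0r sub0r.
  have := le_trans (Hb c) (gauge_le c Ec); rewrite addrN norm10 mul0r subr0.
  by move=> bc_le0; under eq_bigr do rewrite fctE mulNr; rewrite sumrN oppr_ge0.
Qed.

End FiniteSeparation.

Lemma ultra_fmap T U (f : T -> U) (F : set_system T) :
  UltraFilter F -> UltraFilter (f @ F).
Proof.
move=> FU; split; first exact: fmap_proper_filter.
move=> G GF sFG; apply/funext => A; apply/propext; split; last exact: sFG.
move=> GA; have [//|FnA] := in_ultra_setVsetC (f @^-1` A) FU.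
have GnA : G (~` A) by apply: sFG.
by have /filter_ex [? []] : G (A `&` (~` A)) by exact: filterI.
Qed.

Lemma ultra_compact_cvg (I : Type) (T : topologicalType) (F : set_system I) (f : I -> T)
    (A : set T) :
  UltraFilter F -> compact A -> (\forall i \near F, A (f i)) -> exists p, A p /\ f @ F --> p.
Proof.
move=> UF; rewrite compact_ultra => /(_ _ (ultra_fmap f UF)) Ac FA.
by have [p [Ap fp]] := Ac FA; exists p.
Qed.

Section PointwiseTopology.
Variables (T : topologicalType) (R : realType).

Lemma ptws_eval_continuous (t : T) : continuous (fun g : {ptws T -> R} => g t).
Proof.
by move=> f; exact: (@pointwise_cvgP T R _ f (nbhs_filter f)).1 (@cvg_id _ (nbhs f)) t.
Qed.

Lemma closure_ptws_ge0 (A : set (T -> R)) chi t :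
  closure (A : set {ptws T -> R}) chi -> (forall psi, A psi -> 0 <= psi t) -> 0 <= chi t.
Proof.
move=> Achi A_ge0; pose E := (fun g : {ptws T -> R} => g t) @^-1` [set r | 0 <= r].
have /closure_id E_closed : closed E.
  by apply: (continuous_closedP _).1; [exact: ptws_eval_continuous|exact: closed_ge].
suff : closure E chi by rewrite -E_closed.
exact: (closureS (B := E) A_ge0) Achi.
Qed.

Lemma compact_ptws_ubound (D : set (T -> R)) t :
  compact (D : set {ptws T -> R}) -> has_ubound [set phi t | phi in D].
Proof.
move=> Dc; have : compact [set (phi : {ptws T -> R}) t | phi in D].
  exact: continuous_compact (continuous_subspaceT (@ptws_eval_continuous t)) Dc.
move=> /compact_bounded [M [_ HM]]; exists (M + 1) => _ [phi Dphi <-].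
by apply: le_trans (ler_norm _) (HM (M + 1) _ _ _) => //; [lra|exists phi].
Qed.

Definition points_filter : set_system (seq T * R) :=
  filter_from [set i | 0 < i.2]
    (fun i : seq T * R => [set k : seq T * R | 0 < k.2 <= i.2 /\ {subset i.1 <= k.1}]).

Lemma points_filter_proper : ProperFilter points_filter.
Proof.
apply: filter_from_proper; last first.
  by move=> [s e] /= e_gt0; exists (s, e); split=> //=; rewrite e_gt0 lexx.
apply: filter_from_filter; first by exists ([::], 1) => /=.
move=> [s1 e1] [s2 e2] /= e1_gt0 e2_gt0; exists (s1 ++ s2, Num.min e1 e2).
  by rewrite /= lt_min e1_gt0.
move=> [s e] /= [/andP [e_gt0 e_le] s_sub]; rewrite !e_gt0 /=.
move: e_le; rewrite le_min => /andP [-> ->]; split; split=> // t ts; apply: s_sub.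
  by rewrite mem_cat ts.
by rewrite mem_cat ts orbT.
Qed.

Lemma points_filter_event (s : seq T) (d : R) :
  0 < d -> points_filter [set k : seq T * R | 0 < k.2 <= d /\ {subset s <= k.1}].
Proof. by move=> d_gt0; exists (s, d). Qed.

Lemma compact_far_from_closure (Q C : set (T -> R)) :
  compact (Q : set {ptws T -> R}) -> Q `&` closure (C : set {ptws T -> R}) = set0 ->
  exists (s : seq T) (eps : R), 0 < eps /\
    forall gam chi, Q gam -> C chi -> eps <= \sum_(t <- s) `|gam t - chi t|.
Proof.
(* Otherwise choose, for every finite set of points and tolerance, a pair (gam, chi) that
   is that close on those points; along an ultrafilter finer than points_filter the gam's
   converge to some gam in Q, and then so do the chi's, which puts gam in closure C. *)
move=> Qc QC0; apply: contrapT => not_far.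
have near_pair (i : seq T * R) : exists gc : (T -> R) * (T -> R), 0 < i.2 ->
    [/\ Q gc.1, C gc.2 & \sum_(t <- i.1) `|gc.1 t - gc.2 t| < i.2].
  have [i_gt0|] := pselect (0 < i.2); last by exists (0, 0).
  apply: contrapT => no_pair; apply: not_far; exists i.1, i.2; split=> // gam chi Qg Cc.
  by rewrite leNgt; apply/negP => lt; apply: no_pair; exists (gam, chi).
have [gc Hgc] := choice near_pair.
have [U [UU sub_U]] := ultraFilterLemma points_filter_proper.
have FU : Filter U by case: UU => [[]].
have U_gc : \forall i \near U, [/\ Q (gc i).1, C (gc i).2 &
    \sum_(t <- i.1) `|(gc i).1 t - (gc i).2 t| < i.2].
  by apply: filterS (sub_U _ (points_filter_event [::] ltr01)) => i [/andP [/Hgc]].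
have [|gam [Qgam gam_lim]] := ultra_compact_cvg
    (f := fun i => (gc i).1 : {ptws T -> R}) UU Qc.
  by apply: filterS U_gc => i [].
suff : closure (C : set {ptws T -> R}) gam by move=> Cgam; rewrite -[False]/(set0 gam) -QC0.
rewrite closureEcvg; exists ((fun i => ((gc i).2 : {ptws T -> R})) @ U).
  exact: fmap_proper_filter.
split; last by move=> P CP; apply: filterS U_gc => i [_ /CP].
apply/pointwise_cvgP => t; apply/cvgrPdist_lt => e e_gt0.
have e2_gt0 : 0 < e / 2 by rewrite divr_gt0.
have : (fun i => (gc i).1 t) @ U --> gam t by move/pointwise_cvgP: gam_lim; apply.
move=> /cvgrPdist_lt /(_ _ e2_gt0) gam_near.
have t_near := sub_U _ (points_filter_event [:: t] e2_gt0).
suff : \forall i \near U, `|gam t - (gc i).2 t| < e by [].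
apply: filterS (filterI t_near (filterI U_gc gam_near)).
move=> i [[/andP [_ ie] t_in] [[_ _ sum_lt] /= gam_lt]].
have : `|(gc i).1 t - (gc i).2 t| < e / 2.
  apply: le_lt_trans (lt_le_trans sum_lt ie).
  rewrite (perm_big _ (perm_to_rem (t_in t _))) ?mem_head // big_cons lerDl.
  exact: sumr_ge0.
move: gam_lt; rewrite !ltr_norml => /andP [? ?] /andP [? ?]; apply/andP; split; lra.
Qed.

End PointwiseTopology.

Section ConvexMix.
Variables (R : realType) (X : normedModType R) (l : nat) (K : 'I_l -> set (X -> R)).

Definition convex_mix : set (X -> R) :=
  [set gam | exists (mu : 'I_l -> R) (phi : 'I_l -> X -> R),
    [/\ forall j, 0 <= mu j, \sum_j mu j = 1, forall j, K j (phi j) &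
        gam = (fun x => \sum_j mu j * phi j x)]].

Lemma convex_mix_sub_co (A : set (X -> R)) :
  (forall j, K j `<=` A) -> convex_mix `<=` co A.
Proof.
by move=> KA _ [mu [phi [mu_ge0 mu1 Kphi ->]]]; exists l, mu, phi; split=> // j; exact: KA.
Qed.

Lemma convex_mix_in_dual : (forall j, K j `<=` @in_dual R X) -> convex_mix `<=` @in_dual R X.
Proof. by move=> Kd _ [mu [phi [_ _ Kphi ->]]]; apply: in_dual_sum => j; exact: Kd. Qed.

Lemma sub_convex_mix j : (forall j, K j !=set0) -> K j `<=` convex_mix.
Proof.
move=> Kne phi Kphi; have [psi Kpsi] := choice Kne.
exists (fun k => (k == j)%:R), (fun k => if k == j then phi else psi k); split.
- by move=> k; rewrite ler0n.
- by rewrite (bigD1 j) //= eqxx big1 ?addr0 // => k /negbTE ->.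
- by move=> k; case: eqP => [->|].
- apply/funext => x; rewrite (bigD1 j) //= eqxx mul1r big1 ?addr0 // => k /negbTE ->.
  by rewrite mul0r.
Qed.

(* Defs.convex_set, not the convex_set of mathcomp-analysis. *)
Lemma convex_set_lmod (A : set (X -> R)) : Defs.convex_set A ->
  forall a b (t : R), 0 <= t <= 1 -> A a -> A b -> A (t *: a + (1 - t) *: b).
Proof. by move=> Aconv a b t t01 Aa Ab; exact: Aconv. Qed.

Lemma convex_mix_convex : (forall j, Defs.convex_set (K j)) -> Defs.convex_set convex_mix.
Proof.
move=> Kconv g1 g2 t /andP [t_ge0 t_le1] [mu1 [phi1 [mu1_ge0 mu1_1 Kphi1 ->]]].
move=> [mu2 [phi2 [mu2_ge0 mu2_1 Kphi2 ->]]].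
have t'_ge0 : 0 <= 1 - t by lra.
have mix j : exists phi, K j phi /\
    (t * mu1 j) *: phi1 j + ((1 - t) * mu2 j) *: phi2 j = (t * mu1 j + (1 - t) * mu2 j) *: phi.
  have [phi Kphi eq_phi] := convex_conic (convex_set_lmod (Kconv j))
    (mulr_ge0 t_ge0 (mu1_ge0 j)) (mulr_ge0 t'_ge0 (mu2_ge0 j)) (Kphi1 j) (Kphi2 j).
  by exists phi.
have [phi Hphi] := choice (fun j => mix j).
exists (fun j => t * mu1 j + (1 - t) * mu2 j), phi; split.
- by move=> j; apply: addr_ge0; exact: mulr_ge0.
- by rewrite big_split /= -!mulr_sumr mu1_1 mu2_1; ring.
- by move=> j; have [] := Hphi j.
- apply/funext => x; rewrite !mulr_sumr -big_split /=; apply: eq_bigr => j _.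
  have [_ /(congr1 (fun f => f x))] := Hphi j; rewrite !fctE /= => mix_x.
  by rewrite !mulrA; exact: mix_x.
Qed.

Lemma convex_mix_compact :
  (forall j, compact (K j : set {ptws X -> R})) -> compact (convex_mix : set {ptws X -> R}).
Proof.
move=> Kc; rewrite compact_ultra => F UF Fmix.
have FF : Filter F by case: UF => [[]].
pose coords gam (w : ('I_l -> R) * ('I_l -> X -> R)) := convex_mix gam ->
  [/\ forall j, 0 <= w.1 j, \sum_j w.1 j = 1, forall j, K j (w.2 j) &
      gam = (fun x => \sum_j w.1 j * w.2 j x)].
have w_ex gam : exists w, coords gam w.
  have [[mu [phi Hmix]]|nmix] := pselect (convex_mix gam); first by exists (mu, phi).
  by exists (fun _ => 0, fun _ _ => 0).
have [w Hw] := choice w_ex.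
have F_coords : \forall gam \near F, [/\ forall j, 0 <= (w gam).1 j, \sum_j (w gam).1 j = 1,
    forall j, K j ((w gam).2 j) & gam = (fun x => \sum_j (w gam).1 j * (w gam).2 j x)].
  by apply: filterS Fmix => gam /Hw.
have mu_lim j : exists m : R, 0 <= m /\ (fun gam => (w gam).1 j) @ F --> m.
  have [|m [/andP [m_ge0 _] m_lim]] := ultra_compact_cvg
      (f := fun gam => (w gam).1 j) UF (@segment_compact R 0 1).
    apply: filterS F_coords => gam [w_ge0 w_1 _ _]; rewrite /= in_itv /= w_ge0 -w_1.
    by rewrite (bigD1 j) //= lerDl; exact: sumr_ge0.
  by exists m.
have phi_lim j : exists p : X -> R, K j p /\
    (fun gam => ((w gam).2 j : {ptws X -> R})) @ F --> (p : {ptws X -> R}).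
  by apply: ultra_compact_cvg UF (Kc j) _; apply: filterS F_coords => gam [_ _ /(_ j)].
have [m Hm] := choice mu_lim.
have [p Hp] := choice phi_lim.
exists (fun x => \sum_j m j * p j x); split.
  exists m, p; split=> [j||j|//]; [by have [] := Hm j| |by have [] := Hp j].
  have PF : ProperFilter ((fun gam => \sum_j (w gam).1 j) @ F).
    by apply: fmap_proper_filter; exact: ultra_proper.
  apply: (cvg_unique (@Rhausdorff R) (FF := PF)).
    by apply: cvg_big => //; [exact: add_continuous|move=> j _; have [] := Hm j].
  by apply: cvg_near_cst; apply: filterS F_coords => gam [].
apply/pointwise_cvgP => x.
apply: (@cvg_trans _ ((fun gam => \sum_j (w gam).1 j * (w gam).2 j x) @ F)).
  apply: near_eq_cvg; apply: filterS F_coords => gam [_ _ _ /(congr1 (fun f => f x))].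
  by move=> /= ->.
apply: cvg_big => // [|j _]; first exact: add_continuous.
apply: cvgM; first by have [] := Hm j.
by have [_ /pointwise_cvgP] := Hp j; apply.
Qed.

End ConvexMix.

Section WeakStarSeparation.
Variables (R : realType) (X : normedModType R).

Lemma wstar_separation (Q S : set (X -> R)) :
  Q !=set0 -> Defs.convex_set Q -> compact (Q : set {ptws X -> R}) ->
  Q `<=` @in_dual R X -> S `<=` @in_dual R X ->
  Q `&` closure (cone S : set {ptws X -> R}) = set0 ->
  exists (v : X) (eps : R), [/\ 0 < eps, forall gam, Q gam -> gam v <= - eps &
    forall psi, S psi -> 0 <= psi v].
Proof.
move=> Q0 Qconv Qc Qd Sd QS0.
have [s [eps [eps_gt0 far]]] := compact_far_from_closure Qc QS0.
pose x := tnth (in_tuple s).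
pose restr (phi : X -> R) : 'I_(size s) -> R := fun t => phi (x t).
have [y [yQ yS]] : exists y : 'I_(size s) -> R,
    (forall a, (restr @` Q) a -> \sum_t y t * a t <= - eps) /\
    (forall c, (restr @` cone S) c -> 0 <= \sum_t y t * c t).
  apply: finite_cone_separation.
  - by have [g Qg] := Q0; exists (restr g), g.
  - move=> _ _ t t01 [g1 Qg1 <-] [g2 Qg2 <-].
    by exists (fun x => t * g1 x + (1 - t) * g2 x); first exact: Qconv.
  - by exists (fun _ => 0); first exact: cone0.
  - move=> _ _ [c1 Sc1 <-] [c2 Sc2 <-].
    by exists (fun x => c1 x + c2 x); first exact: cone_add.
  - move=> r _ r_ge0 [c Sc <-].
    by exists (fun x => r * c x); first exact: cone_scale.
  - by move=> _ _ [g Qg <-] [c Sc <-]; have := far g c Qg Sc; rewrite big_tnth.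
exists (\sum_t y t *: x t), eps; split=> // [gam Qgam|psi Spsi].
- by rewrite dualf_sum; [apply: yQ; exists gam|exact: Qd].
- by rewrite dualf_sum; [apply: yS; exists psi => //; exact: cone_sub|exact: Sd].
Qed.

End WeakStarSeparation.

Section ConvexCompactDual.
Variables (R : realType) (X : normedModType R).
Implicit Types (C D : set (X -> R)) (v : X).

Definition convex_compact_dual D :=
  [/\ D !=set0, Defs.convex_set D, compact (D : set {ptws X -> R}) & D `<=` @in_dual R X].

Lemma quasidiff_convex_compact_dual (f : X -> R) x Dl Du :
  quasidiff f x Dl Du -> convex_compact_dual Dl /\ convex_compact_dual Du.
Proof. by case=> Dl0 Du0 [Dlconv [Dld Dlc]] [Duconv [Dud Duc]] _. Qed.

Lemma le_supp C v phi : has_ubound [set psi v | psi in C] -> C phi -> phi v <= supp C v.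
Proof. by move=> Cub Cphi; apply: ub_le_sup => //; exists phi. Qed.

Lemma supp_le C v (b : R) : C !=set0 -> (forall phi, C phi -> phi v <= b) -> supp C v <= b.
Proof.
move=> [phi Cphi] Cb; apply: ge_sup; first by exists (phi v), phi.
by move=> _ [psi Cpsi <-]; exact: Cb.
Qed.

Lemma convex_compact_le_supp D v phi : convex_compact_dual D -> D phi -> phi v <= supp D v.
Proof. by case=> _ _ Dc _; apply: le_supp; exact: compact_ptws_ubound. Qed.

Lemma supp0 D : convex_compact_dual D -> supp D 0 = 0.
Proof.
move=> Dcc; have [[phi Dphi] _ _ Dd] := Dcc; apply/le_anti/andP; split.
  by apply: supp_le; [exists phi|move=> psi /Dd /dualf0 ->].
by rewrite -{1}(dualf0 (Dd _ Dphi)); exact: convex_compact_le_supp Dcc Dphi.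
Qed.

Lemma convex_mix_convex_compact_dual l (K : 'I_l -> set (X -> R)) (j0 : 'I_l) :
  (forall j, convex_compact_dual (K j)) -> convex_compact_dual (convex_mix K).
Proof.
move=> K_cc; have [[phi Kphi] _ _ _] := K_cc j0; split.
- by exists phi; apply: sub_convex_mix Kphi => j; case: (K_cc j).
- by apply: convex_mix_convex => j; case: (K_cc j).
- by apply: convex_mix_compact => j; case: (K_cc j).
- by apply: convex_mix_in_dual => j; case: (K_cc j).
Qed.

Lemma affine_convex_compact_dual (a b : R) y D : convex_compact_dual D -> in_dual y ->
  convex_compact_dual [set psi | exists2 phi, D phi & psi = (fun x => a * phi x + b * y x)].
Proof.
move=> [[phi0 Dphi0] Dconv Dc Dd] dy; split.
- by exists (fun x => a * phi0 x + b * y x), phi0.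
- move=> _ _ t t01 [phi1 D1 ->] [phi2 D2 ->].
  exists (fun x => t * phi1 x + (1 - t) * phi2 x); first exact: Dconv.
  by apply/funext => x; ring.
- pose F (g : {ptws X -> R}) : {ptws X -> R} := fun x => a * g x + b * y x.
  have F_cont : continuous F.
    move=> g; apply: (@pointwise_cvgP X R (F @ nbhs g) (F g) _).2 => x.
    have gx : (fun h : {ptws X -> R} => h x) @ nbhs g --> g x by exact: ptws_eval_continuous.
    exact: cvgD (cvgM (cvg_cst a) gx) (cvg_cst (b * y x)).
  suff -> : [set psi | exists2 phi, D phi & psi = (fun x => a * phi x + b * y x)] = F @` D.
    exact: continuous_compact (continuous_subspaceT F_cont) Dc.
  by apply/seteqP; split=> [_ [phi Dphi ->]|_ [phi Dphi <-]]; exists phi.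
- move=> _ [phi Dphi ->].
  by have := in_dual_lc a b (Dd _ Dphi) dy.
Qed.

Lemma shift_convex_compact_dual D y :
  convex_compact_dual D -> in_dual y -> convex_compact_dual (shift_set D y).
Proof.
move=> Dcc dy.
suff -> : shift_set D y = [set psi | exists2 phi, D phi & psi = (fun x => 1 * phi x + 1 * y x)].
  exact: affine_convex_compact_dual.
by apply/seteqP; split=> _ [phi Dphi ->]; exists phi => //; apply/funext => x; rewrite !mul1r.
Qed.

Lemma negshift_convex_compact_dual D x0 :
  convex_compact_dual D -> in_dual x0 -> convex_compact_dual (negshift_set x0 D).
Proof.
move=> Dcc dx0.
suff -> : negshift_set x0 D =
    [set psi | exists2 phi, D phi & psi = (fun x => -1 * phi x + -1 * x0 x)].
  exact: affine_convex_compact_dual.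
by apply/seteqP; split=> _ [phi Dphi ->]; exists phi => //; apply/funext => x;
  rewrite !mulN1r addrC.
Qed.
End ConvexCompactDual.

Lemma co_lt0 (R : realType) (X : normedModType R) (A : set (X -> R)) (v : X) gam :
  (forall psi, A psi -> psi v < 0) -> co A gam -> gam v < 0.
Proof.
move=> A_lt0 [n [c [a [c_ge0 c_1 aA ->]]]].
have [k ck_gt0] : exists k, 0 < c k.
  apply: contrapT => no_pos; suff : \sum_k c k = 0 by rewrite c_1 => /eqP; rewrite oner_eq0.
  apply: big1 => k _; apply/eqP; rewrite eq_le c_ge0 andbT leNgt; apply/negP => ck_gt0.
  by apply: no_pos; exists k.
apply: le_lt_trans (_ : c k * a k v < 0); last by rewrite pmulr_rlt0 // A_lt0.
rewrite (bigD1 k) //= gerDl; apply: sumr_le0 => k' _.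
by apply: mulr_ge0_le0 => //; exact: ltW (A_lt0 _ (aA k')).
Qed.

Section ConeOfConstraints.
Variables (R : realType) (X : normedModType R) (m : nat) (A B : 'I_m -> set (X -> R)).
Hypothesis A_cc : forall i, convex_compact_dual (A i).
Hypothesis B_cc : forall i, convex_compact_dual (B i).

Local Notation generators P := (\bigcup_(k in P) opp_set (A k `|` B k)).

Lemma generators_ge0P (P : set 'I_m) v :
  (forall psi, generators P psi -> 0 <= psi v) <->
  (forall k, P k -> supp (A k) v <= 0 /\ supp (B k) v <= 0).
Proof.
have opp_gen k phi : P k -> (A k `|` B k) phi -> generators P (fun x => - phi x).
  by move=> Pk ABphi; exists k => //; rewrite /opp_set /=; under eq_fun do rewrite opprK.
split=> [gen_ge0 k Pk|AB_le0 psi [k Pk ABpsi]].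
  have le0 D : convex_compact_dual D -> D `<=` A k `|` B k -> supp D v <= 0.
    case=> D0 _ _ _ DAB; apply: supp_le => // phi Dphi.
    by rewrite -oppr_ge0; apply: (gen_ge0 (fun x => - phi x)); exact: opp_gen Pk (DAB _ Dphi).
  by split; [apply: (le0 _ (A_cc k)) => phi; left|apply: (le0 _ (B_cc k)) => phi; right].
have [A_le0 B_le0] := AB_le0 k Pk; rewrite -oppr_le0.
case: ABpsi => [Apsi|Bpsi]; [apply: le_trans A_le0|apply: le_trans B_le0].
  exact: convex_compact_le_supp (A_cc k) Apsi.
exact: convex_compact_le_supp (B_cc k) Bpsi.
Qed.

Lemma generators_in_dual P : generators P `<=` @in_dual R X.
Proof.
move=> psi [k _]; apply: opp_set_in_dual psi => phi [Aphi|Bphi].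
  by case: (A_cc k) => _ _ _; apply.
by case: (B_cc k) => _ _ _; apply.
Qed.

Lemma cone_separationP (P : set 'I_m) D : convex_compact_dual D ->
  (exists v, supp D v < 0 /\ forall k, P k -> supp (A k) v <= 0 /\ supp (B k) v <= 0) <->
  D `&` wstar_closure (cone (generators P)) = set0.
Proof.
move=> Dcc; split=> [[v [Dv_lt0 /generators_ge0P gen_ge0]]|D_far].
  apply/seteqP; split=> // phi [Dphi [_ cl_phi]].
  have := convex_compact_le_supp v Dcc Dphi.
  have := closure_ptws_ge0 cl_phi (fun chi => cone_ge0 gen_ge0); lra.
have [D0 Dconv Dc Dd] := Dcc.
have [|v [eps [eps_gt0 D_le /generators_ge0P ?]]] :=
  wstar_separation D0 Dconv Dc Dd (@generators_in_dual P).
  apply/seteqP; split=> // phi [Dphi cl_phi]; rewrite -D_far.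
  by split=> //; split=> //; exact: Dd.
by exists v; split=> //; apply: le_lt_trans (supp_le D0 D_le) _; rewrite oppr_lt0.
Qed.

Lemma cone_separation_swapP (P : set 'I_m) D : convex_compact_dual D ->
  (exists v, supp D v < 0 /\ forall k, P k -> supp (B k) v <= 0 /\ supp (A k) v <= 0) <->
  D `&` wstar_closure (cone (generators P)) = set0.
Proof.
move=> Dcc; rewrite -cone_separationP //.
by split=> -[v [Dv_lt0 AB_le0]]; exists v; split=> // k /AB_le0 [? ?].
Qed.

Lemma active_separationP l (G : 'I_l -> set (X -> R)) (J : set 'I_l) :
  (forall j, J j -> convex_compact_dual (G j)) ->
  (exists v, (forall j, J j -> supp (G j) v < 0) /\
     forall k, supp (A k) v <= 0 /\ supp (B k) v <= 0) <->
  co (\bigcup_(j in J) G j) `&` wstar_closure (cone (generators [set: 'I_m])) = set0.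
Proof.
move=> G_cc; split=> [[v [G_lt0 AB_le0]]|co_far].
  apply/seteqP; split=> // phi [co_phi [_ cl_phi]].
  have gen_ge0 : forall psi, generators [set: 'I_m] psi -> 0 <= psi v.
    by apply/generators_ge0P => k _; exact: AB_le0.
  have := closure_ptws_ge0 cl_phi (fun chi => cone_ge0 gen_ge0).
  suff : phi v < 0 by lra.
  apply: co_lt0 co_phi => psi [j Jj Gpsi].
  by apply: le_lt_trans (G_lt0 j Jj); exact: convex_compact_le_supp (G_cc j Jj) Gpsi.
have [[j0 Jj0]|J0] := pselect (exists j, J j); last first.
  exists 0; split=> [j Jj|k]; first by exfalso; apply: J0; exists j.
  by rewrite !supp0.
(* Padding the inactive indices with G j0 makes convex_mix K a weak*-compact subset of
   co (\bigcup_(j in J) G j) that contains every active G j. *)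
pose K j := if `[< J j >] then G j else G j0.
have K_cc j : convex_compact_dual (K j) by rewrite /K; case: asboolP => [Jj|_]; exact: G_cc.
have KG j : J j -> G j = K j by rewrite /K; case: asboolP.
have mix_cc := convex_mix_convex_compact_dual j0 K_cc.
have [|v [mix_lt0 AB_le0]] := (cone_separationP [set: 'I_m] mix_cc).2.
  apply/seteqP; split=> // phi [mix_phi cl_phi]; rewrite -co_far; split=> //.
  apply: convex_mix_sub_co mix_phi => j phi'; rewrite /K.
  by case: asboolP => [Jj|_] Gphi'; [exists j|exists j0].
exists v; split=> [j Jj|k]; last exact: AB_le0.
apply: le_lt_trans mix_lt0; apply: supp_le; first by rewrite KG //; case: (K_cc j).
move=> phi Gphi; apply: convex_compact_le_supp mix_cc _.
by apply: sub_convex_mix (_ : K j phi) => [k|]; [case: (K_cc k)|rewrite -KG].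
Qed.

End ConeOfConstraints.

Unset Implicit Arguments. Set Strict Implicit.

Theorem proposition1 (R : realType) (X : completeNormedModType R) (m l : nat)
  (f : 'I_m -> X -> R) (g : 'I_l -> X -> R) (xbar : X)
  (dlf duf : 'I_m -> set (X -> R)) (dlg dug : 'I_l -> set (X -> R))
  (xs ys : 'I_m -> X -> R) (zs : 'I_l -> X -> R) :
  (forall i, f i xbar = 0) -> (forall j, g j xbar <= 0) ->
  (forall i, quasidiff (f i) xbar (dlf i) (duf i)) ->
  (forall j, g j xbar = 0 -> quasidiff (g j) xbar (dlg j) (dug j)) ->
  (forall i, dlf i (xs i)) -> (forall i, duf i (ys i)) ->
  (forall j, g j xbar = 0 -> dug j (zs j)) ->
  [/\ (forall i, exists v : X,
          supp (shift_set (dlf i) (ys i)) v < 0 /\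
          (forall k, k != i ->
             supp (shift_set (dlf k) (ys k)) v <= 0 /\
             supp (negshift_set (xs k) (duf k)) v <= 0)),
      (forall i, exists w : X,
          supp (negshift_set (xs i) (duf i)) w < 0 /\
          (forall k, k != i ->
             supp (negshift_set (xs k) (duf k)) w <= 0 /\
             supp (shift_set (dlf k) (ys k)) w <= 0)) &
      (exists v0 : X,
          (forall j, g j xbar = 0 -> supp (shift_set (dlg j) (zs j)) v0 < 0) /\
          (forall i, supp (shift_set (dlf i) (ys i)) v0 <= 0 /\
                     supp (negshift_set (xs i) (duf i)) v0 <= 0))]
  <->
  ((forall i,
      (shift_set (dlf i) (ys i) `|` negshift_set (xs i) (duf i)) `&`
      wstar_closure (cone (\bigcup_(k in [set k | k != i])
          opp_set (shift_set (dlf k) (ys k) `|` negshift_set (xs k) (duf k))))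
      = set0) /\
   co (\bigcup_(j in [set j | g j xbar = 0]) shift_set (dlg j) (zs j)) `&`
   wstar_closure (cone (\bigcup_(i in [set: 'I_m])
       opp_set (shift_set (dlf i) (ys i) `|` negshift_set (xs i) (duf i))))
   = set0).
Proof.
move=> _ _ qf qg hx hy hz.
have A_cc i : convex_compact_dual (shift_set (dlf i) (ys i)).
  have [Dl_cc [_ _ _ Du_dual]] := quasidiff_convex_compact_dual (qf i).
  exact: shift_convex_compact_dual Dl_cc (Du_dual _ (hy i)).
have B_cc i : convex_compact_dual (negshift_set (xs i) (duf i)).
  have [[_ _ _ Dl_dual] Du_cc] := quasidiff_convex_compact_dual (qf i).
  exact: negshift_convex_compact_dual Du_cc (Dl_dual _ (hx i)).
have G_cc j : g j xbar = 0 -> convex_compact_dual (shift_set (dlg j) (zs j)).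
  move=> gj0; have [Dl_cc [_ _ _ Du_dual]] := quasidiff_convex_compact_dual (qg j gj0).
  exact: shift_convex_compact_dual Dl_cc (Du_dual _ (hz j gj0)).
have condA i := cone_separationP A_cc B_cc [set k | k != i] (A_cc i).
have condB i := cone_separation_swapP A_cc B_cc [set k | k != i] (B_cc i).
have condG := active_separationP A_cc B_cc G_cc.
split=> [[c1 c2 c3]|[cAB cG]].
  split=> [i|]; last exact/condG.
  by rewrite setIUl ((condA i).1 (c1 i)) ((condB i).1 (c2 i)) setU0.
split=> [i|i|]; last exact/condG.
  by apply/condA; move: (cAB i); rewrite setIUl setU_eq0 => -[].
by apply/condB; move: (cAB i); rewrite setIUl setU_eq0 => -[].
Qed.
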